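(* Let $r\in\mathbb{N}_0$ and $n\ge0$. The expected number $E_{n;r}$ of $r$-branches in a binary tree chosen uniformly at random among binary trees with $n$ inner nodes is \[ E_{n;r}=\frac{n+1}{\binom{2n}{n}}\sum_{\lambda\ge1}\lambda\bigg[\binom{2n}{n+1-\lambda2^r}-2\binom{2n}{n-\lambda2^r}+\binom{2n}{n-1-\lambda2^r}\bigg], \] where binomial coefficients with negative lower index are $0$.
   Context: A binary tree is either a leaf $\square$ or an inner node with an ordered pair of subtrees (left, right) which are binary trees; its size is its number of inner nodes. The register function is defined by $\mathrm{Reg}(\square)=0$, and for a tree with subtrees $t_1,t_2$: $\mathrm{Reg}(t)=\max\{\mathrm{Reg}(t_1),\mathrm{Reg}(t_2)\}$ if these differ, and $\mathrm{Reg}(t_1)+1$ otherwise. Label every node (inner node or leaf) by the register function of the subtree rooted at it. An $r$-branch is a maximal chain of nodes labeled $r$, i.e. a connected component (with respect to parent–child edges) of the set of nodes labeled $r$. *)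

From mathcomp Require Import all_boot all_order all_algebra.
Set Implicit Arguments. Unset Strict Implicit. Unset Printing Implicit Defensive.
Import GRing.Theory Num.Theory.

Inductive btree : Type := Leaf | Node of btree & btree.

Fixpoint tsize (t : btree) : nat :=
  if t is Node a b then (tsize a + tsize b).+1 else 0.

Fixpoint reg (t : btree) : nat :=
  if t is Node a b then
    let ra := reg a in let rb := reg b in
    if ra == rb then ra.+1 else maxn ra rb
  else 0.

Fixpoint trees_depth (d : nat) : seq btree :=
  Leaf :: (if d is d'.+1 then
             [seq Node l r | l <- trees_depth d', r <- trees_depth d']
           else [::]).

(* All binary trees with exactly n inner nodes (height <= n suffices). *)
Definition trees (n : nat) : seq btree :=
  [seq t <- trees_depth n | tsize t == n].

(* Every node (inner node or leaf) v is labelled reg(subtree at v).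
   [tops r t p] counts the nodes of t labelled r whose parent is not
   labelled r, where p says whether the parent of the root of t is labelled r.
   In a rooted tree, each connected component (w.r.t. parent-child edges)
   of the set of nodes labelled r has exactly one topmost node, namely a node
   labelled r whose parent is absent or not labelled r; so this counts the
   r-branches. *)
Fixpoint tops (r : nat) (t : btree) (parent_r : bool) : nat :=
  let here := reg t == r in
  ((here && ~~ parent_r) : nat) +
  (if t is Node a b then tops r a here + tops r b here else 0).

Definition branches (r : nat) (t : btree) : nat := tops r t false.

Definition E_branches (n r : nat) : rat :=
  (\sum_(t <- trees n) (branches r t)%:R) / (size (trees n))%:R.

Definition binZ (m : nat) (k : int) : nat :=
  match k with Posz k' => 'C(m, k') | Negz _ => 0%N end.

(* Substituting z = u / (1 + u)^2 in the Catalan equation T = 1 + z T^2 gives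
   T = 1 + u.  Decomposing a tree at its root yields functional equations for
   the generating functions A_r of trees of register r and S_r of r-branches,
   whose solutions in terms of u are
     A_r = (1 - u^2) u^(2^r - 1) / (1 - u^(2^(r+1))),
     S_r = (1 - u^2) u^(2^r - 1) / (1 - u^(2^r))^2.
   Expanding S_r = sum_l l (1 - u^2) u^(l 2^r - 1) and using
   sum_n C(2n, n + k) z^n = u^k (1 + u) / (1 - u), the coefficient of z^n in S_r
   is the binomial sum of the statement, and that of T is the Catalan number.
   All series are handled as polynomials modulo X^(n+1): the generating
   polynomial of the trees of height at most n agrees with the full series up to
   degree n, and 1 - x is invertible modulo X^(n+1) whenever X divides x. *)

From mathcomp Require Import all_boot all_order all_algebra.
From mathcomp Require Import ring zify.
Set Implicit Arguments. Unset Strict Implicit. Unset Printing Implicit Defensive.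
Import GRing.Theory Num.Theory.
Local Open Scope ring_scope.

(** * Congruences modulo X^M *)

Section CongruenceModXn.
Variable F : fieldType.
Implicit Types p q r x : {poly F}.

Definition eqmodX (M : nat) p q := 'X^M %| p - q.

Variable M : nat.

Lemma eqmodX_eq p q : p = q -> eqmodX M p q.
Proof. by move=> ->; rewrite /eqmodX subrr dvdp0. Qed.

Lemma eqmodX_refl p : eqmodX M p p.
Proof. exact: eqmodX_eq. Qed.

Lemma eqmodX_sym p q : eqmodX M p q -> eqmodX M q p.
Proof. by rewrite /eqmodX -opprB dvdpNr. Qed.

Lemma eqmodX_trans q p r : eqmodX M p q -> eqmodX M q r -> eqmodX M p r.
Proof.
by move=> hpq hqr; rewrite /eqmodX -[p](subrK q) -addrA dvdp_add.
Qed.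

Lemma eqmodXD (p p' q q' : {poly F}) :
  eqmodX M p p' -> eqmodX M q q' -> eqmodX M (p + q) (p' + q').
Proof.
by move=> hp hq; rewrite /eqmodX opprD addrACA dvdp_add.
Qed.

Lemma eqmodXN (p p' : {poly F}) : eqmodX M p p' -> eqmodX M (- p) (- p').
Proof. by rewrite /eqmodX -opprD dvdpNr. Qed.

Lemma eqmodXM (p p' q q' : {poly F}) :
  eqmodX M p p' -> eqmodX M q q' -> eqmodX M (p * q) (p' * q').
Proof.
move=> hp hq; rewrite /eqmodX.
have -> : p * q - p' * q' = (p - p') * q + p' * (q - q') by ring.
by apply: dvdp_add; [apply: dvdp_mulr | apply: dvdp_mull].
Qed.

Lemma eqmodXX (p p' : {poly F}) k : eqmodX M p p' -> eqmodX M (p ^+ k) (p' ^+ k).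
Proof.
move=> hp; elim: k => [|k IHk]; first exact: eqmodX_refl.
by rewrite !exprS eqmodXM.
Qed.

Lemma eqmodX_sum (I : Type) (s : seq I) (P : pred I) (f g : I -> {poly F}) :
  (forall i, P i -> eqmodX M (f i) (g i)) ->
  eqmodX M (\sum_(i <- s | P i) f i) (\sum_(i <- s | P i) g i).
Proof.
by move=> fg; apply: (big_ind2 (fun p q => eqmodX M p q)); [apply: eqmodX_refl|apply: eqmodXD|].
Qed.

Lemma eqmodX_mulX x p q :
  'X %| x -> eqmodX M p q -> eqmodX M.+1 (x * p) (x * q).
Proof. by move=> hx hpq; rewrite /eqmodX -mulrBr exprS dvdp_mul. Qed.

Lemma eqmodX_leq N p q : (N <= M)%N -> eqmodX M p q -> eqmodX N p q.
Proof. by move=> hNM; apply: dvdp_trans; rewrite dvdp_exp2l. Qed.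

Lemma eqmodX_dvdX c p : (0 < M)%N -> eqmodX M p ('X * c) -> 'X %| p.
Proof.
move=> hM hp; rewrite -[p](subrK ('X * c)) dvdp_add ?dvdp_mulr //.
by apply: dvdp_trans hp; rewrite -[X in X %| _]expr1 dvdp_exp2l.
Qed.

Lemma eqmodX_coef p q i : eqmodX M p q -> (i < M)%N -> p`_i = q`_i.
Proof.
rewrite /eqmodX => hpq hi; apply/eqP; rewrite -subr_eq0 -coefB -(divpK hpq).
by rewrite coefMXn hi.
Qed.

Lemma eqmodX_coefP p q : (forall i, (i < M)%N -> p`_i = q`_i) -> eqmodX M p q.
Proof.
move=> hpq; rewrite /eqmodX; set d := p - q.
have d_small i : (i < M)%N -> d`_i = 0 by move=> hi; rewrite coefB hpq ?subrr.
apply/dvdpP; exists (\poly_(i < size d) d`_(i + M)); apply/polyP => i.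
rewrite coefMXn; case: ltnP => hi; first by rewrite d_small.
rewrite coef_poly subnK //; case: ltnP => // hd.
by rewrite nth_default // (leq_trans hd) ?leq_subr.
Qed.

Lemma eqmodX_cancel1B x p q :
  'X %| x -> eqmodX M ((1 - x) * p) ((1 - x) * q) -> eqmodX M p q.
Proof.
(* [V] inverts [1 - x] modulo [X^M] because [X^M] divides [x ^+ M]. *)
move=> hx h; set V := \sum_(i < M) x ^+ i.
have hV : (1 - x) * V = 1 - x ^+ M by rewrite -opprB mulNr -subrX1 opprB.
rewrite /eqmodX in h *.
have -> : p - q = V * ((1 - x) * p - (1 - x) * q) + x ^+ M * (p - q).
  by rewrite -mulrBr mulrA [V * _]mulrC hV; ring.
by apply: dvdp_add; [apply: dvdp_mull | apply/dvdp_mulr/dvdp_exp2r].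
Qed.

End CongruenceModXn.

Arguments eqmodX_trans {F M} q {p r}.
Arguments eqmodX_cancel1B {F M} x {p q}.

Ltac eqmodX_congr :=
  repeat first [ assumption | apply: eqmodX_refl | apply: eqmodXD
               | apply: eqmodXM | apply: eqmodXN | apply: eqmodXX ].

(** * The series sum_i C(2i, i + k) z^i *)

Lemma binSS m k : 'C(m.+2, k.+2) = ('C(m, k.+2) + 2 * 'C(m, k.+1) + 'C(m, k))%N.
Proof. by rewrite !binS; lia. Qed.

Section BinomialSeries.
Variable F : fieldType.

Definition binom_series (M k : nat) : {poly F} := \poly_(i < M) ('C(i.*2, i + k))%:R.

Lemma coef_binom_series M k i : (i < M)%N -> (binom_series M k)`_i = 'C(i.*2, i + k)%:R.
Proof. by move=> iM; rewrite coef_poly iM. Qed.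

Lemma coef_natr_mul (k : nat) (p : {poly F}) i : (k%:R * p)`_i = k%:R * p`_i.
Proof. by rewrite !mulr_natl coefMn. Qed.

Lemma binom_seriesS M k :
  eqmodX M (binom_series M k.+1)
    ('X * (binom_series M k + 2 * binom_series M k.+1 + binom_series M k.+2)).
Proof.
apply: eqmodX_coefP => -[|i] hi; rewrite coefXM coef_poly hi /=; first by rewrite bin0n.
rewrite !coefD coef_natr_mul !coef_poly ltnW // doubleS !addSn !addnS binSS !natrD.
by ring.
Qed.

Lemma bin_double_mid j : 'C(j.+1.*2, j.+1) = (2 * ('C(j.*2, j.+1) + 'C(j.*2, j)))%N.
Proof.
have mid : 'C(j.*2.+1, j) = 'C(j.*2.+1, j.+1).
  have e : (j.*2.+1 - j.+1 = j)%N by rewrite -addnn; lia.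
  by rewrite -[X in 'C(_, X) = _]e bin_sub // ltnS -addnn leq_addr.
by rewrite doubleS binS mid binS; lia.
Qed.

Lemma binom_series0 M :
  eqmodX M (binom_series M 0)
    (1 + 'X * (2 * binom_series M 0 + 2 * binom_series M 1)).
Proof.
apply: eqmodX_coefP => -[|i] hi; rewrite coefD coefXM coefC coef_poly hi /=.
  by rewrite bin0n addr0.
rewrite add0r !coefD !coef_natr_mul !coef_poly ltnW // !addn0 addn1 bin_double_mid.
by rewrite natrM natrD; ring.
Qed.
End BinomialSeries.

(** * Solving the functional equations in terms of u *)

Section Pow2.
Variables (R : pzSemiRingType) (x : R) (r : nat).

Lemma expr_pow2 : x ^+ (2 ^ r) = x * x ^+ (2 ^ r).-1.
Proof. by rewrite -exprS prednK ?expn_gt0. Qed.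

Lemma expr_pow2S : x ^+ (2 ^ r.+1) = (x ^+ (2 ^ r)) ^+ 2.
Proof. by rewrite expnSr exprM. Qed.

Lemma expr_pow2S_pred : x ^+ (2 ^ r.+1).-1 = x ^+ (2 ^ r) * x ^+ (2 ^ r).-1.
Proof. by rewrite -exprD expnS; congr (_ ^+ _); have := expn_gt0 2 r; lia. Qed.
End Pow2.

Lemma weighted_geometric_sum (R : comPzRingType) (q : R) N :
  (1 - q) ^+ 2 * \sum_(1 <= l < N.+1) l%:R * q ^+ l.-1
  = 1 - N.+1%:R * q ^+ N + N%:R * q ^+ N.+1.
Proof.
elim: N => [|N IHN]; first by rewrite big_geq // mulr0 expr0 expr1; ring.
by rewrite big_nat_recr //= mulrDr IHN !exprS -!natr1; ring.
Qed.

Section SeriesSolutions.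
Variables (F : fieldType) (M : nat) (u : {poly F}).
Hypothesis u_dvdX : 'X %| u.
Hypothesis u_eq : eqmodX M u ('X * (1 + u) ^+ 2).

(* In the step lemmas [w] stands for [u ^+ (2 ^ r).-1], so that [u * w = u ^+ 2 ^ r]. *)
Lemma reg_lt_series_step (L A w : {poly F}) :
  eqmodX M (L * (1 - u * w)) ((1 + u) * (1 - u * w) - (1 - u ^+ 2) * w) ->
  eqmodX M (A * (1 - (u * w) ^+ 2)) ((1 - u ^+ 2) * w) ->
  eqmodX M ((L + A) * (1 - (u * w) ^+ 2))
           ((1 + u) * (1 - (u * w) ^+ 2) - (1 - u ^+ 2) * ((u * w) * w)).
Proof.
move=> hL hA.
apply: (eqmodX_trans (L * (1 - u * w) * (1 + u * w) + A * (1 - (u * w) ^+ 2))).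
  by apply: eqmodX_eq; ring.
apply: (eqmodX_trans (((1 + u) * (1 - u * w) - (1 - u ^+ 2) * w) * (1 + u * w)
                      + (1 - u ^+ 2) * w)); first by eqmodX_congr.
by apply: eqmodX_eq; ring.
Qed.

Lemma reg_series_step (A A' L w : {poly F}) :
  eqmodX M (A * (1 - (u * w) ^+ 2)) ((1 - u ^+ 2) * w) ->
  eqmodX M (L * (1 - (u * w) ^+ 2))
           ((1 + u) * (1 - (u * w) ^+ 2) - (1 - u ^+ 2) * ((u * w) * w)) ->
  eqmodX M A' ('X * (A ^+ 2 + 2 * A' * L)) ->
  eqmodX M (A' * (1 - ((u * w) ^+ 2) ^+ 2)) ((1 - u ^+ 2) * ((u * w) * w)).
Proof.
move=> hA hL hA'; set q := u * w.
(* [A' = X A^2 / (1 - 2 X L)]; [den] evaluates the denominator using [X (1 + u)^2 = u]. *)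
have den : eqmodX M ((1 + u) ^+ 2 * (1 - q ^+ 2) * (1 - 2 * 'X * L))
                    ((1 - u ^+ 2) * (1 + q ^+ 2)).
  apply: (eqmodX_trans ((1 + u) ^+ 2 * (1 - q ^+ 2)
                        - 2 * ('X * (1 + u) ^+ 2) * (L * (1 - q ^+ 2)))).
    by apply: eqmodX_eq; ring.
  apply: (eqmodX_trans ((1 + u) ^+ 2 * (1 - q ^+ 2)
            - 2 * u * ((1 + u) * (1 - q ^+ 2) - (1 - u ^+ 2) * (q * w)))).
    by eqmodX_congr; apply: eqmodX_sym.
  by apply: eqmodX_eq; rewrite /q; ring.
have num : eqmodX M (A' * (1 - 2 * 'X * L)) ('X * A ^+ 2).
  apply: (eqmodX_trans (A' - 'X * (A ^+ 2 + 2 * A' * L) + 'X * A ^+ 2)).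
    by apply: eqmodX_eq; ring.
  apply: (eqmodX_trans ('X * (A ^+ 2 + 2 * A' * L) - 'X * (A ^+ 2 + 2 * A' * L)
                        + 'X * A ^+ 2)); first by eqmodX_congr.
  by apply: eqmodX_eq; ring.
apply: (eqmodX_cancel1B (u ^+ 2)); first by rewrite exprS dvdp_mulr.
apply: (eqmodX_trans (A' * (1 - q ^+ 2) * ((1 - u ^+ 2) * (1 + q ^+ 2)))).
  by apply: eqmodX_eq; ring.
apply: (eqmodX_trans ((1 + u) ^+ 2 * (1 - q ^+ 2) ^+ 2 * ('X * A ^+ 2))).
  apply: (eqmodX_trans (A' * (1 - q ^+ 2) * ((1 + u) ^+ 2 * (1 - q ^+ 2) * (1 - 2 * 'X * L)))).
    by have := eqmodX_sym den; eqmodX_congr.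
  apply: (eqmodX_trans ((1 + u) ^+ 2 * (1 - q ^+ 2) ^+ 2 * (A' * (1 - 2 * 'X * L)))).
    by apply: eqmodX_eq; ring.
  by eqmodX_congr.
apply: (eqmodX_trans (('X * (1 + u) ^+ 2) * (A * (1 - q ^+ 2)) ^+ 2)).
  by apply: eqmodX_eq; ring.
apply: (eqmodX_trans (u * ((1 - u ^+ 2) * w) ^+ 2)); first by eqmodX_congr; apply: eqmodX_sym.
by apply: eqmodX_eq; rewrite /q; ring.
Qed.

Lemma branch_fixpoint_solve (P c : {poly F}) :
  eqmodX M P (c + 'X * (2 * (1 + u) * P)) -> eqmodX M ((1 - u) * P) ((1 + u) * c).
Proof.
move=> hP.
apply: (eqmodX_trans ((1 + u - 2 * u) * P)); first by apply: eqmodX_eq; ring.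
apply: (eqmodX_trans ((1 + u - 2 * ('X * (1 + u) ^+ 2)) * P)).
  by eqmodX_congr.
apply: (eqmodX_trans ((1 + u) * (P - 'X * (2 * (1 + u) * P)))).
  by apply: eqmodX_eq; ring.
apply: eqmodXM; first exact: eqmodX_refl.
apply: (eqmodX_trans (c + 'X * (2 * (1 + u) * P) - 'X * (2 * (1 + u) * P))).
  by eqmodX_congr.
by apply: eqmodX_eq; ring.
Qed.

Lemma branch_series0_step (S : {poly F}) :
  eqmodX M S (1 + 'X * (2 * (1 + u) * S)) ->
  eqmodX M (S * (1 - u) ^+ 2) (1 - u ^+ 2).
Proof.
move=> /branch_fixpoint_solve hS.
apply: (eqmodX_trans ((1 - u) * ((1 - u) * S))); first by apply: eqmodX_eq; ring.
apply: (eqmodX_trans ((1 - u) * ((1 + u) * 1))); first by eqmodX_congr.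
by apply: eqmodX_eq; ring.
Qed.

Lemma branch_seriesS_step (S A w : {poly F}) :
  eqmodX M (A * (1 - (u * w) ^+ 2)) ((1 - u ^+ 2) * w) ->
  eqmodX M S ('X * A ^+ 2 + 'X * (2 * (1 + u) * S)) ->
  eqmodX M (S * (1 - (u * w) ^+ 2) ^+ 2) ((1 - u ^+ 2) * ((u * w) * w)).
Proof.
move=> hA /branch_fixpoint_solve hS; set q := u * w.
apply: (eqmodX_cancel1B (u ^+ 2)); first by rewrite exprS dvdp_mulr.
apply: (eqmodX_trans ((1 + u) * (1 - q ^+ 2) ^+ 2 * ((1 - u) * S))).
  by apply: eqmodX_eq; ring.
apply: (eqmodX_trans ((1 + u) * (1 - q ^+ 2) ^+ 2 * ((1 + u) * ('X * A ^+ 2)))).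
  by eqmodX_congr.
apply: (eqmodX_trans (('X * (1 + u) ^+ 2) * (A * (1 - q ^+ 2)) ^+ 2)).
  by apply: eqmodX_eq; ring.
apply: (eqmodX_trans (u * ((1 - u ^+ 2) * w) ^+ 2)).
  by eqmodX_congr; apply: eqmodX_sym.
by apply: eqmodX_eq; rewrite /q; ring.
Qed.

Local Notation B := (binom_series F M).

(* Induction on the modulus: the recurrences of [B] determine its coefficients
   of degree [<= m] from those of degree [< m]. *)
Lemma binom_series_closed k : eqmodX M (B k * (1 - u)) (u ^+ k * (1 + u)).
Proof.
suff closed_mod m : (m <= M)%N -> forall k, eqmodX m (B k * (1 - u)) (u ^+ k * (1 + u)).
  exact: closed_mod.
elim: m => [_ {}k|m IHm lt_mM]; first by rewrite /eqmodX expr0 dvd1p.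
have {}IHm := IHm (ltnW lt_mM).
have u_eq_m : eqmodX m.+1 ('X * (1 + u) ^+ 2) u by apply/eqmodX_sym/(eqmodX_leq lt_mM).
case=> [|{}k].
  apply: (eqmodX_trans ((1 + 'X * (2 * B 0 + 2 * B 1)) * (1 - u))).
    by apply/eqmodXM/eqmodX_refl/(eqmodX_leq lt_mM)/binom_series0.
  apply: (eqmodX_trans (1 - u + 'X * (2 * (B 0 * (1 - u)) + 2 * (B 1 * (1 - u))))).
    by apply: eqmodX_eq; ring.
  apply: (eqmodX_trans (1 - u + 'X * (2 * (u ^+ 0 * (1 + u)) + 2 * (u ^+ 1 * (1 + u))))).
    have IH0 := IHm 0%N; have IH1 := IHm 1%N.
    by apply/eqmodXD/(eqmodX_mulX (dvdpp _)); [apply: eqmodX_refl | eqmodX_congr].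
  apply: (eqmodX_trans (1 - u + 2 * ('X * (1 + u) ^+ 2))); first by apply: eqmodX_eq; ring.
  apply: (eqmodX_trans (1 - u + 2 * u)); first by eqmodX_congr.
  by apply: eqmodX_eq; ring.
apply: (eqmodX_trans ('X * (B k + 2 * B k.+1 + B k.+2) * (1 - u))).
  by apply/eqmodXM/eqmodX_refl/(eqmodX_leq lt_mM)/binom_seriesS.
apply: (eqmodX_trans ('X * (B k * (1 - u) + 2 * (B k.+1 * (1 - u)) + B k.+2 * (1 - u)))).
  by apply: eqmodX_eq; ring.
apply: (eqmodX_trans ('X * (u ^+ k * (1 + u) + 2 * (u ^+ k.+1 * (1 + u))
                            + u ^+ k.+2 * (1 + u)))).
  have IH0 := IHm k; have IH1 := IHm k.+1; have IH2 := IHm k.+2.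
  by apply: (eqmodX_mulX (dvdpp _)); eqmodX_congr.
apply: (eqmodX_trans (u ^+ k * (1 + u) * ('X * (1 + u) ^+ 2))).
  by apply: eqmodX_eq; rewrite !exprS; ring.
apply: (eqmodX_trans (u ^+ k * (1 + u) * u)); first by eqmodX_congr.
by apply: eqmodX_eq; rewrite exprS; ring.
Qed.

Lemma binom_series_diff2 m : (0 < m)%N ->
  eqmodX M (B m.-1 - 2 * B m + B m.+1)
           ((1 - u ^+ 2) * u ^+ m.-1).
Proof.
move=> m_gt0; apply: (eqmodX_cancel1B u) => //.
apply: (eqmodX_trans (B m.-1 * (1 - u) - 2 * (B m * (1 - u))
                      + B m.+1 * (1 - u))); first by apply: eqmodX_eq; ring.
have := binom_series_closed m.-1; have := binom_series_closed m.
have := binom_series_closed m.+1; rewrite -(prednK m_gt0) => h2 h1 h0.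
apply: (eqmodX_trans (u ^+ m.-1 * (1 + u) - 2 * (u ^+ m.-1.+1 * (1 + u))
                      + u ^+ m.-1.+2 * (1 + u))); first by eqmodX_congr.
by apply: eqmodX_eq; rewrite !exprS; ring.
Qed.

Lemma catalan_closed : eqmodX M (1 + u) (B 0 - B 1).
Proof.
apply: (eqmodX_cancel1B u) => //.
have h0 := eqmodX_sym (binom_series_closed 0).
have h1 := eqmodX_sym (binom_series_closed 1).
apply: (eqmodX_trans (u ^+ 0 * (1 + u) - u ^+ 1 * (1 + u))); first by apply: eqmodX_eq; ring.
apply: (eqmodX_trans (B 0 * (1 - u) - B 1 * (1 - u))).
  by eqmodX_congr.
by apply: eqmodX_eq; ring.
Qed.

Lemma reg_series_closed (A : nat -> {poly F}) :
  eqmodX M (A 0%N) 1 ->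
  (forall r, eqmodX M (A r.+1) ('X * (A r ^+ 2 + 2 * A r.+1 * \sum_(s < r.+1) A s))) ->
  forall r, eqmodX M (A r * (1 - u ^+ (2 ^ r.+1))) ((1 - u ^+ 2) * u ^+ (2 ^ r).-1).
Proof.
move=> A0 AS.
suff closed r :
    eqmodX M ((\sum_(s < r) A s) * (1 - u ^+ (2 ^ r)))
             ((1 + u) * (1 - u ^+ (2 ^ r)) - (1 - u ^+ 2) * u ^+ (2 ^ r).-1) /\
    eqmodX M (A r * (1 - u ^+ (2 ^ r.+1))) ((1 - u ^+ 2) * u ^+ (2 ^ r).-1).
  by move=> r; case: (closed r).
elim: r => [|r [IHL IHA]].
  rewrite big_ord0 expn0 expn1 expr1 expr0 mulr1.
  split; first by apply: eqmodX_eq; ring.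
  by apply: (eqmodX_trans (1 * (1 - u ^+ 2))); [eqmodX_congr | rewrite mul1r eqmodX_refl].
move: IHL IHA; rewrite big_ord_recr /= !(expr_pow2S u) expr_pow2S_pred (expr_pow2 u r).
move=> /reg_lt_series_step IHL /[dup] /IHL {}IHL IHA; split => //.
by have := AS r; rewrite big_ord_recr; apply: reg_series_step.
Qed.

Lemma branch_series_closed (A S : nat -> {poly F}) :
  (forall r, eqmodX M (A r * (1 - u ^+ (2 ^ r.+1))) ((1 - u ^+ 2) * u ^+ (2 ^ r).-1)) ->
  eqmodX M (S 0%N) (1 + 'X * (2 * (1 + u) * S 0%N)) ->
  (forall r, eqmodX M (S r.+1) ('X * A r ^+ 2 + 'X * (2 * (1 + u) * S r.+1))) ->
  forall r, eqmodX M (S r * (1 - u ^+ (2 ^ r)) ^+ 2) ((1 - u ^+ 2) * u ^+ (2 ^ r).-1).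
Proof.
move=> Aclosed S0 SS [|r]; first by rewrite expn0 expr1 expr0 mulr1; exact: branch_series0_step.
move: (Aclosed r); rewrite expr_pow2S_pred !(expr_pow2S u) (expr_pow2 u r) => Ar.
exact: branch_seriesS_step Ar (SS r).
Qed.

Lemma branch_series_binom (S : {poly F}) r N : (M < N)%N ->
  eqmodX M (S * (1 - u ^+ (2 ^ r)) ^+ 2) ((1 - u ^+ 2) * u ^+ (2 ^ r).-1) ->
  eqmodX M S (\sum_(1 <= l < N) l%:R * (B (l * 2 ^ r).-1
               - 2 * B (l * 2 ^ r) + B (l * 2 ^ r).+1)).
Proof.
case: N => // N lt_MN; set q := u ^+ (2 ^ r); set w := u ^+ (2 ^ r).-1 => S_closed.
have q_dvdX : 'X %| q by rewrite /q expr_pow2 dvdp_mulr.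
apply: (eqmodX_cancel1B q) => //; apply: (eqmodX_cancel1B q) => //.
apply: (eqmodX_trans ((1 - u ^+ 2) * w)).
  by apply: (eqmodX_trans (S * (1 - q) ^+ 2)); [apply: eqmodX_eq; ring | ].
have diff2 (l : nat) : eqmodX M
    (l%:R * (B (l * 2 ^ r).-1 - 2 * B (l * 2 ^ r)
             + B (l * 2 ^ r).+1))
    ((1 - u ^+ 2) * w * (l%:R * q ^+ l.-1)).
  case: l => [|l]; first by rewrite !mul0r mulr0 eqmodX_refl.
  apply: (eqmodX_trans (l.+1%:R * ((1 - u ^+ 2) * u ^+ (l.+1 * 2 ^ r).-1))).
    by apply/eqmodXM/binom_series_diff2; rewrite ?eqmodX_refl ?muln_gt0 ?expn_gt0.
  have -> : ((l.+1 * 2 ^ r).-1 = (2 ^ r).-1 + 2 ^ r * l)%N.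
    by have := expn_gt0 2 r; move: (2 ^ r)%N => x; nia.
  by apply: eqmodX_eq; rewrite exprD exprM -/w -/q; ring.
apply: eqmodX_sym.
apply: (eqmodX_trans ((1 - q) * ((1 - q) *
          \sum_(1 <= l < N.+1) (1 - u ^+ 2) * w * (l%:R * q ^+ l.-1)))).
  by do 2 apply: (eqmodXM (eqmodX_refl _ _)); apply: eqmodX_sum => l _.
rewrite -mulr_sumr mulrA -expr2 mulrCA weighted_geometric_sum /eqmodX.
have -> : (1 - u ^+ 2) * w * (1 - N.+1%:R * q ^+ N + N%:R * q ^+ N.+1) - (1 - u ^+ 2) * w
          = (1 - u ^+ 2) * w * (N%:R * q - N.+1%:R) * q ^+ N.
  by rewrite [q ^+ N.+1]exprS; ring.
by apply/dvdp_mull/(dvdp_trans (dvdp_exp2l _ (ltnSE lt_MN)))/dvdp_exp2r.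
Qed.
End SeriesSolutions.

(** * Generating polynomials of trees *)

Lemma reg_node_eq a b r :
  ((reg (Node a b) == r) =
   ((reg a).+1 == r) * ((reg b).+1 == r) + (reg a == r) * (reg b < r)
   + (reg a < r) * (reg b == r) :> nat)%N.
Proof.
rewrite /=; move: (reg a) (reg b) => x y.
case: (ltngtP x y); lia.
Qed.

Lemma tops_parent r t p : (tops r t p + (p && (reg t == r)) = branches r t)%N.
Proof. by rewrite /branches; case: t => [|a b] /=; case: p; case: (_ == r); lia. Qed.

Lemma branches_node r a b :
  branches r (Node a b) =
  (branches r a + branches r b + ((reg a).+1 == r) * ((reg b).+1 == r))%N.
Proof.
rewrite -(tops_parent r a (reg (Node a b) == r)) -(tops_parent r b (reg (Node a b) == r)).
rewrite {1}/branches /= andbT.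
move: (tops _ a _) (tops _ b _) => ta tb; move: (reg a) (reg b) => x y.
case: (ltngtP x y); lia.
Qed.

Section TreeSeries.
Variable F : fieldType.
Implicit Types (D : nat) (f g h : btree -> {poly F}).

Definition gf D f : {poly F} := \sum_(t <- trees_depth D) f t * 'X^(tsize t).

Lemma eq_gf D f g : f =1 g -> gf D f = gf D g.
Proof. by move=> fg; apply: eq_bigr => t _; rewrite fg. Qed.

Lemma gfD D f g : gf D (fun t => f t + g t) = gf D f + gf D g.
Proof. by rewrite -big_split; apply: eq_bigr => t _; rewrite mulrDl. Qed.

Lemma eqmodX_gf M D f g :
  (forall t, eqmodX M (f t) (g t)) -> eqmodX M (gf D f) (gf D g).
Proof. by move=> fg; apply: eqmodX_sum => t _; apply/eqmodXM/eqmodX_refl. Qed.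

Lemma gf0 f : gf 0 f = f Leaf.
Proof. by rewrite /gf /= big_seq1 expr0 mulr1. Qed.

Lemma gf_mul D g h : gf D (fun a => gf D (fun b => g a * h b)) = gf D g * gf D h.
Proof.
rewrite /gf mulr_suml; apply: eq_bigr => a _; rewrite mulr_sumr mulr_suml.
by apply: eq_bigr => b _; ring.
Qed.

Lemma gf_node D f :
  gf D.+1 f = f Leaf + 'X * gf D (fun a => gf D (fun b => f (Node a b))).
Proof.
rewrite /gf /= big_cons expr0 mulr1 big_allpairs_dep mulr_sumr; congr (_ + _).
apply: eq_bigr => a _; rewrite mulr_suml mulr_sumr; apply: eq_bigr => b _ /=.
by rewrite exprS exprD; ring.
Qed.

Lemma gf_stable D f : eqmodX D.+1 (gf D.+1 f) (gf D f).
Proof.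
elim: D f => [|D IHD] f.
  by rewrite gf_node !gf0 /eqmodX addrAC subrr add0r expr1 dvdp_mulr.
rewrite [gf D.+2 f]gf_node [gf D.+1 f]gf_node.
apply/eqmodXD/(eqmodX_mulX (dvdpp _)); first exact: eqmodX_refl.
apply: (eqmodX_trans (gf D.+1 (fun a => gf D (fun b => f (Node a b))))).
  by apply: eqmodX_gf => a; apply: IHD.
exact: IHD.
Qed.

Lemma gf_fixpoint D f :
  eqmodX D.+1 (gf D f) (f Leaf + 'X * gf D (fun a => gf D (fun b => f (Node a b)))).
Proof. by rewrite -gf_node; apply/eqmodX_sym/gf_stable. Qed.

Lemma coef_gf n (c : btree -> nat) : (gf n (fun t => (c t)%:R))`_n = \sum_(t <- trees n) (c t)%:R.
Proof.
rewrite /gf /trees coef_sum big_filter [RHS]big_mkcond; apply: eq_bigr => t _.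
by rewrite mulr_natl coefMn coefXn eq_sym; case: eqP; rewrite ?mul0rn.
Qed.

Definition tree_series D := gf D (fun=> 1).
Definition reg_series D r := gf D (fun t => (reg t == r)%:R).
Definition branch_series D r := gf D (fun t => (branches r t)%:R).

Lemma coef_tree_series n : (tree_series n)`_n = (size (trees n))%:R.
Proof. by rewrite (coef_gf _ (fun=> 1%N)) -sum1_size natr_sum. Qed.

Lemma gf_mul_tree D g : gf D (fun a => gf D (fun=> g a)) = gf D g * tree_series D.
Proof. by rewrite -gf_mul; apply: eq_gf => a; apply: eq_gf => b; rewrite mulr1. Qed.

Lemma gf_tree_mul D h : gf D (fun=> gf D h) = tree_series D * gf D h.
Proof. by rewrite -gf_mul; apply: eq_gf => a; apply: eq_gf => b; rewrite mul1r. Qed.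

Lemma tree_series_fixpoint D :
  eqmodX D.+1 (tree_series D) (1 + 'X * tree_series D ^+ 2).
Proof.
by rewrite expr2 -gf_tree_mul; apply: gf_fixpoint.
Qed.

Lemma gf_zero D : gf D (fun=> 0) = 0.
Proof. by rewrite /gf big1 // => t _; rewrite mul0r. Qed.

Lemma reg_series0_fixpoint D : eqmodX D.+1 (reg_series D 0) 1.
Proof.
apply: (eqmodX_trans _ (gf_fixpoint _ _)).
under eq_gf do under eq_gf do rewrite reg_node_eq /= !(muln0, mul0n, addn0) mulr0n.
by rewrite !gf_zero mulr0 addr0 eqmodX_refl.
Qed.

Lemma gf_reg_lt D r : gf D (fun t => (reg t < r)%:R) = \sum_(s < r) reg_series D s.
Proof.
elim: r => [|r IHr]; first by under eq_gf do rewrite ltn0; rewrite gf_zero big_ord0.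
rewrite big_ord_recr /= -IHr -gfD; apply: eq_gf => t.
by rewrite -natrD; congr (_%:R); lia.
Qed.

Lemma reg_seriesS_fixpoint D r :
  eqmodX D.+1 (reg_series D r.+1)
    ('X * (reg_series D r ^+ 2 + 2 * reg_series D r.+1 * \sum_(s < r.+1) reg_series D s)).
Proof.
apply: (eqmodX_trans _ (gf_fixpoint _ _)).
under eq_gf do under eq_gf do rewrite reg_node_eq /= !natrD !natrM.
rewrite add0r; apply: eqmodX_eq; congr (_ * _).
under eq_gf do rewrite !gfD.
rewrite !gfD !gf_mul gf_reg_lt.
under [in X in X * _]eq_gf do rewrite eqSS.
under [in X in _ * X]eq_gf do rewrite eqSS.
by rewrite -/(reg_series D r) -/(reg_series D r.+1); ring.
Qed.
Lemma branch_series0_fixpoint D :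
  eqmodX D.+1 (branch_series D 0) (1 + 'X * (2 * tree_series D * branch_series D 0)).
Proof.
apply: (eqmodX_trans _ (gf_fixpoint _ _)).
under eq_gf do under eq_gf do rewrite branches_node /= addn0 natrD.
under eq_gf do rewrite gfD.
rewrite gfD gf_mul_tree gf_tree_mul -/(branch_series D 0).
by apply: eqmodX_eq; rewrite [branches _ Leaf]/branches /=; ring.
Qed.

Lemma branch_seriesS_fixpoint D r :
  eqmodX D.+1 (branch_series D r.+1)
    ('X * reg_series D r ^+ 2 + 'X * (2 * tree_series D * branch_series D r.+1)).
Proof.
apply: (eqmodX_trans _ (gf_fixpoint _ _)).
under eq_gf do under eq_gf do rewrite branches_node /= !natrD natrM.
under eq_gf do rewrite !gfD.
rewrite !gfD gf_mul_tree gf_tree_mul gf_mul -/(branch_series D r.+1) -/(reg_series D r).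
by apply: eqmodX_eq; rewrite [branches _ Leaf]/branches /= add0r; ring.
Qed.
End TreeSeries.

Section Expansion.
Variables (F : fieldType) (n : nat).
Local Notation u := (tree_series F n - 1).

Lemma tree_seriesB1_fixpoint : eqmodX n.+1 u ('X * (1 + u) ^+ 2).
Proof.
apply: (eqmodX_trans (1 + 'X * tree_series F n ^+ 2 - 1)).
  exact/eqmodXD/eqmodX_refl/tree_series_fixpoint.
by apply: eqmodX_eq; ring.
Qed.

Lemma tree_seriesB1_dvdX : 'X %| u.
Proof. exact: eqmodX_dvdX (ltn0Sn n) tree_seriesB1_fixpoint. Qed.

Lemma tree_series_binom :
  eqmodX n.+1 (tree_series F n) (binom_series F n.+1 0 - binom_series F n.+1 1).
Proof.
by have := catalan_closed tree_seriesB1_dvdX tree_seriesB1_fixpoint; rewrite addrC subrK.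
Qed.

Lemma branch_series_expansion r N : (n.+1 < N)%N ->
  eqmodX n.+1 (branch_series F n r)
    (\sum_(1 <= l < N) l%:R * (binom_series F n.+1 (l * 2 ^ r).-1
       - 2 * binom_series F n.+1 (l * 2 ^ r) + binom_series F n.+1 (l * 2 ^ r).+1)).
Proof.
have T_eq : tree_series F n = 1 + u by rewrite addrC subrK.
have := branch_series0_fixpoint F n; have := branch_seriesS_fixpoint F n.
rewrite T_eq => SS S0 lt_nN.
have A_closed := reg_series_closed tree_seriesB1_dvdX tree_seriesB1_fixpoint
                   (reg_series0_fixpoint F n) (reg_seriesS_fixpoint F n).
apply: (branch_series_binom tree_seriesB1_dvdX tree_seriesB1_fixpoint lt_nN).
exact: (branch_series_closed (S := branch_series F n) tree_seriesB1_dvdX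
          tree_seriesB1_fixpoint A_closed S0 SS r).
Qed.
End Expansion.

Lemma binZ_sub n k : binZ n.*2 (n%:Z - k%:Z) = 'C(n.*2, n + k).
Proof.
case: (leqP k n) => [kn|nk].
  rewrite subzn // /binZ -bin_sub; last by rewrite -addnn; lia.
  by congr 'C(_, _); rewrite -addnn; lia.
have -> : n%:Z - k%:Z = Negz (k - n).-1 by rewrite NegzE prednK ?subn_gt0 //; lia.
by rewrite /= bin_small // -addnn; lia.
Qed.

Lemma binZ_diff2_coef (F : fieldType) n m : (0 < m)%N ->
  (binZ n.*2 (n.+1%:Z - m%:Z))%:R - 2 * (binZ n.*2 (n%:Z - m%:Z))%:R
   + (binZ n.*2 (n%:Z - 1 - m%:Z))%:R
  = (binom_series F n.+1 m.-1 - 2 * binom_series F n.+1 m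
     + binom_series F n.+1 m.+1)`_n.
Proof.
move=> m_gt0; rewrite !coefD coefN coef_natr_mul !coef_binom_series // -!binZ_sub.
have -> : n.+1%:Z - m%:Z = n%:Z - m.-1%:Z by rewrite -(prednK m_gt0); lia.
by have -> : n%:Z - 1 - m%:Z = n%:Z - m.+1%:Z by lia.
Qed.

Lemma binom_diff_catalan (R : numFieldType) n :
  'C(n.*2, n)%:R - 'C(n.*2, n.+1)%:R = 'C(n.*2, n)%:R / n.+1%:R :> R.
Proof.
have n1 : n.+1%:R != 0 :> R by rewrite pnatr_eq0.
have e : n.+1%:R * 'C(n.*2, n.+1)%:R = n%:R * 'C(n.*2, n)%:R :> R.
  by rewrite -!natrM mul_bin_left -addnn addnK.
have -> : 'C(n.*2, n.+1)%:R = n%:R * 'C(n.*2, n)%:R / n.+1%:R :> R.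
  by rewrite -e mulrC mulKf.
by move: n1; rewrite -natr1 => n1; field.
Qed.

Theorem proposition3 (r n N : nat) (hN : (n + 2 <= N)%N) :
  E_branches n r =
  (n.+1)%:R / ('C(n.*2, n))%:R *
  \sum_(1 <= l < N)
    (l%:R * ((binZ n.*2 (n.+1%:Z - (l * 2 ^ r)%N%:Z))%:R
             - 2 * (binZ n.*2 (n%:Z - (l * 2 ^ r)%N%:Z))%:R
             + (binZ n.*2 (n%:Z - 1 - (l * 2 ^ r)%N%:Z))%:R) : rat).
Proof.
have lt_nN : (n.+1 < N)%N by rewrite -addn2.
rewrite /E_branches -coef_gf -coef_tree_series.
rewrite (eqmodX_coef (tree_series_binom rat n) (ltnSn n)).
rewrite (eqmodX_coef (branch_series_expansion rat r lt_nN) (ltnSn n)).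
rewrite coefB !coef_binom_series // addn0 addn1 binom_diff_catalan invf_div mulrC coef_sum.
congr (_ * _); apply: eq_big_nat => l /andP[l_gt0 _].
by rewrite coef_natr_mul binZ_diff2_coef // muln_gt0 l_gt0 expn_gt0.
Qed.
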